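(* Let $k\ge 1$ be an integer, let $\beta\in\mathbb{R}_{>1}$ be a Parry number and let $U_\beta$ be the corresponding canonical Parry--Bertrand numeration system. Let $\mathbf{s}$ be a binary $U_\beta$-automatic sequence, generated by a DFAO $\mathcal{B}$. Then $C_{2k}(\mathbf{s},N)\gg N$; that is, there exists a constant $c>0$, depending only on $\beta$, $k$ and the number of states of $\mathcal{B}$, such that $C_{2k}(\mathbf{s},N)\ge cN$ for all sufficiently large $N$.
   Context: Correlation measure: for a sequence $\mathbf{s}=(\mathbf{s}(n))_{n\ge0}$ over $\{0,1\}$, an integer $k\ge1$, a vector $D=(d_1,\dots,d_k)\in\mathbb{N}^k$ with $0\le d_1<d_2<\cdots<d_k$ and $M\in\mathbb{N}$, put $V(\mathbf{s},M,D)=\sum_{n=0}^{M-1}(-1)^{\mathbf{s}(n+d_1)+\cdots+\mathbf{s}(n+d_k)}$. The $N$th correlation measure of order $k$ is $C_k(\mathbf{s},N)=\max_{M,D}|V(\mathbf{s},M,D)|$, the maximum taken over all such $D$ and all integers $M$ with $M+d_k\le N$. $\beta$-expansions: for $\beta>1$, let $A_\beta=\{0,1,\dots,\lceil\beta\rceil-1\}$; for $x\in[0,1)$, $d_\beta(x)$ is the greedy expansion $x=\sum_{j\ge1}c_j\beta^{-j}$ with $c_j\in A_\beta$, and $d_\beta(1)=\lim_{x\to1^-}d_\beta(x)$. $\beta$ is a Parry number if $d_\beta(1)$ is ultimately periodic. Canonical numeration $U_\beta$: write $d_\beta(1)=t(1)\cdots t(m)(t(m+1)\cdots t(m+k'))^\omega$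 with $m,k'\ge0$ minimal. Set $U_\beta(0)=1$, $U_\beta(i)=t(1)U_\beta(i-1)+\cdots+t(i)U_\beta(0)+1$ for $1\le i\le m+k'-1$, and for $n\ge m+k'$: $U_\beta(n)=t(1)U_\beta(n-1)+\cdots+t(m+k')U_\beta(n-m-k')+U_\beta(n-k')-t(1)U_\beta(n-k'-1)-\cdots-t(m)U_\beta(n-m-k')$. Every $n\ge0$ has a greedy representation $n=\sum_{i=0}^t c_iU_\beta(i)$; $\mathrm{rep}_{U_\beta}(n)=c_t\cdots c_0$ (with $c_t\neq 0$; $\mathrm{rep}(0)$ is the empty word), and $L_\beta=\{\mathrm{rep}_{U_\beta}(n):n\ge0\}$. A binary sequence $\mathbf{s}$ is $U_\beta$-automatic if there is a deterministic finite automaton with output (DFAO) $\mathcal{B}$ over the digit alphabet, with outputs in $\{0,1\}$, such that $\mathbf{s}(n)$ is the output of $\mathcal{B}$ on input $\mathrm{rep}_{U_\beta}(n)$ for all $n\ge0$. *)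

From Stdlib Require Import Reals.
From mathcomp Require Import all_boot all_order all_algebra.
Set Implicit Arguments. Unset Strict Implicit. Unset Printing Implicit Defensive.
Import Order.TTheory GRing.Theory Num.Theory.

Definition Tbeta (beta x : R) : R :=
  Rminus (Rmult beta x) (IZR (Int_part (Rmult beta x))).

(* greedy digit: gdigit beta x j is the digit c_{j+1} of d_beta(x)
   (0-indexed), c_{j+1} = floor(beta * T_beta^j(x)). *)
Definition gdigit (beta x : R) (j : nat) : Z :=
  Int_part (Rmult beta (Nat.iter j (Tbeta beta) x)).

(* t is d_beta(1) = lim_{x -> 1^-} d_beta(x) (limit in the product
   topology of digit sequences: each digit is eventually constant as
   x -> 1^-).  t j is the digit t(j+1). *)
Definition is_dbeta1 (beta : R) (t : nat -> nat) : Prop :=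
  forall j : nat, exists delta : R, Rlt 0 delta /\
    forall x : R, Rlt (Rminus 1 delta) x -> Rlt x 1 ->
      gdigit beta x j = Z.of_nat (t j).

(* t = t(1)...t(m) (t(m+1)...t(m+p))^omega  (0-indexed: t j = t(j+1)) *)
Definition periodic_from (t : nat -> nat) (m p : nat) : Prop :=
  (0 < p)%N /\ forall j : nat, (m <= j)%N -> t (j + p)%N = t j.

Definition minimal_preperiod_period (t : nat -> nat) (m p : nat) : Prop :=
  periodic_from t m p /\
  (forall m' p', periodic_from t m' p' -> (m <= m')%N) /\
  (forall p', periodic_from t m p' -> (p <= p')%N).

Local Open Scope ring_scope.

(* one-based digit t(i) = t (i-1), as an integer *)
Definition tdig (t : nat -> nat) (i : nat) : int := (t i.-1)%:Z.

(* next value U(i) computed from the list s = [U(0); ...; U(i-1)] *)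
Definition Unext (t : nat -> nat) (m p : nat) (s : seq int) (i : nat) : int :=
  let U := fun j => nth 0 s j in
  if i == 0%N then 1
  else if (i < m + p)%N then
    \sum_(1 <= j < i.+1) tdig t j * U (i - j)%N + 1
  else
    \sum_(1 <= j < (m + p).+1) tdig t j * U (i - j)%N + U (i - p)%N
    - \sum_(1 <= j < m.+1) tdig t j * U (i - p - j)%N.

Fixpoint Useq (t : nat -> nat) (m p : nat) (n : nat) : seq int :=
  match n with
  | 0 => [::]
  | n'.+1 => let s := Useq t m p n' in rcons s (Unext t m p s n')
  end.

Definition Ubeta (t : nat -> nat) (m p : nat) (n : nat) : int :=
  nth 0 (Useq t m p n.+1) n.

Local Close Scope ring_scope.

Fixpoint gdigits (U : nat -> nat) (i r : nat) : seq nat :=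
  match i with
  | 0 => [:: r %/ U 0]
  | i'.+1 => (r %/ U i) :: gdigits U i' (r %% U i)
  end.

(* greedy representation rep_U(n) = c_t ... c_0 (most significant digit
   first), where t is the largest index with U(t) <= n; rep_U(0) is the
   empty word.  (For an increasing U with U(0) = 1 such t is < n+1.) *)
Definition rep (U : nat -> nat) (n : nat) : seq nat :=
  if n == 0 then [::]
  else gdigits U (\max_(i <- iota 0 n.+1 | U i <= n) i) n.

Record DFAO := {
  dfao_state : finType;
  dfao_init : dfao_state;
  dfao_delta : dfao_state -> nat -> dfao_state;
  dfao_out : dfao_state -> bool
}.

Definition dfao_run (B : DFAO) (w : seq nat) : bool :=
  @dfao_out B (foldl (@dfao_delta B) (@dfao_init B) w).

Definition generates (B : DFAO) (U : nat -> nat) (s : nat -> bool) : Prop :=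
  forall n : nat, s n = dfao_run B (rep U n).

Local Open Scope ring_scope.

Definition Vcorr (k : nat) (s : nat -> bool) (M : nat) (D : 'I_k -> nat) : int :=
  \sum_(n < M) (-1) ^+ (\sum_(i < k) (s (n + D i)%N : nat))%N.

Local Close Scope ring_scope.

Definition strictly_increasing (k : nat) (D : 'I_k -> nat) : bool :=
  [forall i : 'I_k, forall j : 'I_k, (i < j) ==> (D i < D j)].

(* C_k(s,N): max of |V(s,M,D)| over 0 <= d_1 < ... < d_k and M with
   M + d_k <= N (all these quantities are <= N, so the ranges are finite). *)
Definition Ccorr (k : nat) (s : nat -> bool) (N : nat) : nat :=
  \max_(D : {ffun 'I_k -> 'I_N.+1} | strictly_increasing (fun i => nat_of_ord (D i)))
    \max_(M < N.+1 | [forall i : 'I_k, M + D i <= N])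
      `|Vcorr s M (fun i => nat_of_ord (D i))|%N.

(* Let q be the number of states of the automaton. For [n < U j] and [J]
   large, [n + U J] is represented by [1 0^r rep(n)], where only [r] depends on
   [J]. Reading [1 0^r] with [r >= q] leads to a state which is periodic in [r]
   with a period dividing [q`!], so for the [2k] offsets [d_i = U (J + i q`!)]
   and every [n < M := U j] the bits [s (n + d_i)] do not depend on [i]. As [2k] is even,
   every term of [V(s, M, D)] equals 1, whence [|V| = M]. Since
   [U n <= K U (n - 1)] for a constant [K], [j] can be chosen with [M >= c N].
   The representation of [n + U J] needs [U (n - 1) + U (n - m - p) <= U n]; this
   holds because [d_beta(1)] starts with a nonzero digit and, not being finite,
   has a nonzero digit in its period. *)

From Stdlib Require Import Reals Lra Lia.
From mathcomp Require Import all_boot all_order all_algebra zify.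

Set Implicit Arguments.
Unset Strict Implicit.
Unset Printing Implicit Defensive.

Section BetaExpansion.
Local Open Scope R_scope.
Variable beta : R.
Hypothesis beta_gt1 : 1 < beta.

Fixpoint sum_below (f : nat -> R) (J : nat) : R :=
  if J is J'.+1 then sum_below f J' + f J' else 0.

Definition digit_value (t : nat -> nat) (J : nat) : R :=
  sum_below (fun j => INR (t j) * (/ beta) ^ j.+1) J.

Lemma invbeta_range : 0 < / beta < 1.
Proof.
split; first by apply: Rinv_0_lt_compat; lra.
by rewrite -Rinv_1; apply: Rinv_lt_contravar; lra.
Qed.

Lemma Tbeta_range y : 0 <= Tbeta beta y < 1.
Proof. by rewrite /Tbeta; case: (base_Int_part (beta * y)); lra. Qed.

Lemma iter_Tbeta_range x J : 0 <= x < 1 -> 0 <= Nat.iter J (Tbeta beta) x < 1.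
Proof. by case: J => [//|J] _; apply: Tbeta_range. Qed.

Lemma greedy_expansion x J :
  x = sum_below (fun j => IZR (gdigit beta x j) * (/ beta) ^ j.+1) J
      + (/ beta) ^ J * Nat.iter J (Tbeta beta) x.
Proof.
elim: J => [|J IH] /=; first lra.
rewrite {1}IH /gdigit /Tbeta /=; field; lra.
Qed.

Lemma dbeta1_prefix t : is_dbeta1 beta t ->
  forall J, exists delta, 0 < delta /\ forall x, 1 - delta < x -> x < 1 ->
    forall j, (j < J)%N -> gdigit beta x j = Z.of_nat (t j).
Proof.
move=> Ht; elim=> [|J [d [d_gt0 IH]]].
  by exists 1; split=> [|x _ _ j]; [lra|rewrite ltn0].
have [d' [d'_gt0 HJ]] := Ht J.
exists (Rmin d d'); split=> [|x x_gt x_lt1 j]; first exact: Rmin_glb_lt.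
have := Rmin_l d d'; have := Rmin_r d d'.
rewrite ltnS leq_eqVlt => ? ? /orP[/eqP->|lt_jJ]; first by apply: HJ; lra.
by apply: IH => //; lra.
Qed.

Lemma ge1_of_upper_bound_near1 a b :
  a < 1 -> (forall x, a < x -> x < 1 -> x < b) -> 1 <= b.
Proof.
move=> a_lt1 Hb; case: (Rle_lt_dec 1 b) => // b_lt1.
have := Rmax_l a b; have := Rmax_r a b.
have : Rmax a b < 1 by apply: Rmax_lub_lt.
move=> ? ? ?; have := Hb ((Rmax a b + 1) / 2); lra.
Qed.

(* Points just below 1 share the first [J] digits of [d_beta(1)], so these
   digits alone approximate 1 from below within [beta^-J]. *)
Lemma dbeta1_digit_value_bounds t : is_dbeta1 beta t ->
  forall J, 1 - (/ beta) ^ J <= digit_value t J < 1.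
Proof.
move=> Ht J; have [d [d_gt0 Hpre]] := dbeta1_prefix Ht J.
set a := Rmax 0 (1 - d).
have a_lt1 : a < 1 by apply: Rmax_lub_lt; lra.
have near1 x : a < x -> x < 1 ->
    digit_value t J <= x /\ x < digit_value t J + (/ beta) ^ J.
{ move=> x_gt x_lt1; have := Rmax_l 0 (1 - d); have := Rmax_r 0 (1 - d).
  rewrite -/a => ? ?.
  have Hdig : forall j, (j < J)%N -> gdigit beta x j = Z.of_nat (t j).
    by apply: Hpre; lra.
  have Hval : sum_below (fun j => IZR (gdigit beta x j) * (/ beta) ^ j.+1) J
              = digit_value t J.
  { rewrite /digit_value; elim: J Hdig {Hpre} => //= J IH Hdig.
    rewrite IH => [|j ?]; last by apply: Hdig; lia.
    by rewrite Hdig // -INR_IZR_INZ. }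
  have := greedy_expansion x J; rewrite Hval.
  have := @iter_Tbeta_range x J ltac:(lra).
  have : 0 < (/ beta) ^ J by apply: pow_lt; case: invbeta_range.
  move=> ? ? ?; split; nra. }
split.
- suff : 1 <= digit_value t J + (/ beta) ^ J by lra.
  by apply: (ge1_of_upper_bound_near1 a_lt1) => x ? ?; case: (near1 x).
- by case: (near1 ((a + 1) / 2)); lra.
Qed.

Lemma dbeta1_head_pos t : is_dbeta1 beta t -> (0 < t 0%N)%N.
Proof.
move=> Ht; have [H _] := dbeta1_digit_value_bounds Ht 1.
move: H; rewrite /digit_value /=; case: (t 0%N) => // H.
by have := invbeta_range; move: H; rewrite /=; lra.
Qed.

Lemma dbeta1_not_finite t : is_dbeta1 beta t ->
  forall m, ~ (forall j, (m <= j)%N -> t j = 0%N).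
Proof.
move=> Ht m t_zero.
have stable J : (m <= J)%N -> digit_value t J = digit_value t m.
{ elim: J => [|J IH]; first by rewrite leqn0 => /eqP->.
  rewrite leq_eqVlt => /orP[/eqP->//|lt_mJ].
  have -> : digit_value t J.+1 = digit_value t J + INR (t J) * (/ beta) ^ J.+1 by [].
  by rewrite IH // t_zero // Rmult_0_l Rplus_0_r. }
have [_ Hm] := dbeta1_digit_value_bounds Ht m.
have [ib_gt0 ib_lt1] := invbeta_range.
have [N HN] : exists N, forall n, (n >= N)%coq_nat -> Rabs ((/ beta) ^ n) < 1 - digit_value t m.
  by apply: pow_lt_1_zero; [rewrite Rabs_right; lra | lra].
have := HN (N + m)%N ltac:(lia); rewrite Rabs_right; last by apply/Rle_ge/pow_le; lra.
have [Hlow _] := dbeta1_digit_value_bounds Ht (N + m).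
by rewrite stable in Hlow; [lra | lia].
Qed.

End BetaExpansion.

Lemma periodic_window_pos (t : nat -> nat) m p : periodic_from t m p ->
  ~ (forall j, (m <= j)%N -> t j = 0%N) -> exists2 j0, (m <= j0 < m + p)%N & (0 < t j0)%N.
Proof.
move=> [p_gt0 t_per] not_finite.
have [/hasP[j0 j0_win j0_pos] | no_pos] := boolP (has (fun j => 0 < t j)%N (iota m p)).
  by exists j0; rewrite // -mem_iota.
case: not_finite; elim/ltn_ind=> j IH m_le_j.
case: (ltnP j (m + p)) => [j_lt | j_ge].
  by apply/eqP; rewrite -leqn0 leqNgt; apply: contra no_pos => ?; apply/hasP; exists j;
    rewrite ?mem_iota ?m_le_j.
by rewrite -(subnK (leq_trans (leq_addl m p) j_ge)) t_per ?IH; lia.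
Qed.

Import GRing.Theory Num.Theory.

Section UbetaRecurrence.
Local Open Scope ring_scope.
Variables (t : nat -> nat) (m p : nat).
Local Notation U := (Ubeta t m p).

Lemma size_Useq n : size (Useq t m p n) = n.
Proof. by elim: n => //= n IH; rewrite size_rcons IH. Qed.

Lemma nth_Useq n j : (j < n)%N -> nth 0 (Useq t m p n) j = U j.
Proof.
elim: n => // n IH j_lt; rewrite /= nth_rcons size_Useq.
case: (ltnP j n) => [j_lt_n | j_ge_n]; first by rewrite IH.
have -> : j = n by lia.
by rewrite eqxx /Ubeta /= nth_rcons size_Useq ltnn eqxx.
Qed.

Lemma Ubeta_Unext n : U n = Unext t m p (Useq t m p n) n.
Proof. by rewrite /Ubeta /= nth_rcons size_Useq ltnn eqxx. Qed.

Lemma Ubeta_init n : (0 < n < m + p)%N ->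
  U n = \sum_(1 <= j < n.+1) tdig t j * U (n - j) + 1.
Proof.
move=> /andP[n_gt0 n_lt]; rewrite Ubeta_Unext /Unext gtn_eqF // n_lt.
by congr (_ + _); apply: eq_big_nat => j j_in; rewrite nth_Useq //; lia.
Qed.

Lemma Ubeta_rec n : (m + p <= n)%N -> (0 < p)%N ->
  U n = \sum_(1 <= j < (m + p).+1) tdig t j * U (n - j) + U (n - p)
    - \sum_(1 <= j < m.+1) tdig t j * U (n - p - j).
Proof.
move=> n_ge p_gt0; rewrite Ubeta_Unext /Unext ifF; last by lia.
rewrite ltnNge n_ge /= nth_Useq; last by lia.
by congr (_ + _ - _); apply: eq_big_nat => j j_in; rewrite nth_Useq //; lia.
Qed.

End UbetaRecurrence.

Lemma le_sum_nat_term (R : numDomainType) (F : nat -> R) a b i : (a <= i < b)%N ->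
  (forall j, (a <= j < b)%N -> 0 <= F j)%R -> (F i <= \sum_(a <= j < b) F j)%R.
Proof.
move=> /andP[a_le_i i_lt_b] F_ge0.
have sum_ge0 c d : (a <= c)%N -> (d <= b)%N -> (0 <= \sum_(c <= j < d) F j)%R.
  by move=> ? ?; rewrite big_nat_cond sumr_ge0 // => j /andP[/andP[? ?] _]; apply: F_ge0; lia.
rewrite (big_cat_nat a_le_i (ltnW i_lt_b)) (big_ltn i_lt_b) /=.
by rewrite addrCA lerDl addr_ge0 // sum_ge0 // ltnW.
Qed.

Section UbetaGrowth.
Import Order.TTheory.
Local Open Scope ring_scope.
Variables (t : nat -> nat) (m p j0 : nat).
Hypotheses (p_gt0 : (0 < p)%N) (t0_gt0 : (0 < t 0)%N)
  (j0_window : (m <= j0 < m + p)%N) (tj0_gt0 : (0 < t j0)%N).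
Local Notation U := (Ubeta t m p).
Local Notation h := (m + p)%N.

Definition tsum : int := \sum_(1 <= j < h.+1) tdig t j.

Section Step.
Variable n : nat.
Hypotheses (n_gt0 : (0 < n)%N)
  (U_below : forall i j, (i <= j < n)%N -> 1 <= U i <= U j).

Let U_ge1 i : (i < n)%N -> 1 <= U i.
Proof. by move=> i_lt; have /andP[] := @U_below i i ltac:(lia). Qed.
Let U_ge0 i : (i < n)%N -> 0 <= U i.
Proof. by move/U_ge1; lia. Qed.
Let U_le i j : (i <= j < n)%N -> U i <= U j.
Proof. by move=> /U_below /andP[]. Qed.

Lemma lincomb_ge0 b q : (b <= n - q)%N -> 0 <= \sum_(1 <= j < b.+1) tdig t j * U (n - q - j).
Proof.
move=> b_le; rewrite big_nat_cond sumr_ge0 // => j /andP[/andP[? ?] _].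
by rewrite mulr_ge0 // U_ge0 //; lia.
Qed.

Lemma lincomb_le_tsum b : (b <= h)%N -> (b <= n)%N ->
  \sum_(1 <= j < b.+1) tdig t j * U (n - j) <= tsum * U n.-1.
Proof.
move=> b_le_h b_le_n.
apply: (@le_trans _ _ (\sum_(1 <= j < b.+1) tdig t j * U n.-1)).
  rewrite big_nat_cond [X in _ <= X]big_nat_cond; apply: ler_sum => j /andP[j_in _].
  by rewrite ler_wpM2l // U_le //; lia.
rewrite -mulr_suml ler_wpM2r ?U_ge0 ?prednK // /tsum.
rewrite [X in _ <= X](big_cat_nat (n := b.+1)) //=.
by rewrite lerDl big_nat_cond sumr_ge0.
Qed.

Lemma lincomb_ge_last b : (0 < b <= n)%N ->
  U n.-1 <= \sum_(1 <= j < b.+1) tdig t j * U (n - j).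
Proof.
move=> b_in; apply: le_trans (le_sum_nat_term (F := fun j => tdig t j * U (n - j))
  (i := 1) _ _); last 2 first.
- by lia.
- by move=> j j_in; rewrite mulr_ge0 // U_ge0 //; lia.
by rewrite subn1 ler_peMl ?U_ge0 ?prednK // /tdig lez_nat.
Qed.

Lemma Ubeta_step_init : (n < h)%N -> U n.-1 < U n /\ U n <= (tsum + 1) * U n.-1.
Proof.
move=> n_lt; rewrite [U n]Ubeta_init ?n_gt0 // mulrDl mul1r.
have := lincomb_ge_last (b := n); have := lincomb_le_tsum (b := n).
have := U_ge1 (i := n.-1); lia.
Qed.

Lemma Ubeta_step_rec_upper : (h <= n)%N -> U n <= (tsum + 1) * U n.-1.
Proof.
move=> n_ge; rewrite [U n]Ubeta_rec // mulrDl mul1r.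
have := lincomb_le_tsum (b := h); have := lincomb_ge0 (b := m) (q := p).
have := @U_le (n - p) n.-1; lia.
Qed.

(* The nonzero digit [t j0] of the period contributes the term [U (n - h)]. *)
Lemma Ubeta_step_rec_lower : (h <= n)%N -> U n.-1 + U (n - h) <= U n.
Proof.
move=> n_ge; rewrite [U n]Ubeta_rec //.
set S2 := \sum_(1 <= j < m.+1) _.
case: (posnP m) => [m0 | m_gt0].
  have S2_0 : S2 = 0 by rewrite /S2 m0 big_geq.
  have := lincomb_ge_last (b := h); have -> : (n - p = n - h)%N by lia.
  lia.
rewrite (big_cat_nat (n := m.+1)) //=; last by lia.
set A1 := \sum_(1 <= j < m.+1) _; set A2 := \sum_(m.+1 <= j < h.+1) _.
have A2_ge : U (n - h) <= A2.
{ apply: le_trans (le_sum_nat_term (F := fun j => tdig t j * U (n - j)) (i := j0.+1) _ _).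
  - apply: (@le_trans _ _ (U (n - j0.+1))); first by rewrite U_le //; lia.
    by rewrite ler_peMl ?U_ge0 /tdig ?lez_nat //=; lia.
  - by lia.
  - by move=> j j_in; rewrite mulr_ge0 // U_ge0 //; lia. }
have A1S2_ge : U n.-1 - U (n - p - 1) <= A1 - S2.
{ have -> : A1 - S2 = \sum_(1 <= j < m.+1) tdig t j * (U (n - j) - U (n - p - j)).
    by rewrite /A1 /S2 -sumrB; apply: eq_bigr => j _; rewrite mulrBr.
  apply: le_trans (le_sum_nat_term (i := 1) _ _); last 2 first.
  - by lia.
  - by move=> j j_in; rewrite mulr_ge0 // subr_ge0 U_le //; lia.
  have -> : (n - 1 = n.-1)%N by lia.
  by rewrite ler_peMl ?subr_ge0 ?U_le /tdig ?lez_nat //; lia. }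
have := @U_le (n - p - 1) (n - p); lia.
Qed.

Lemma Ubeta_step_lt : U n.-1 < U n.
Proof.
case: (ltnP n h) => [n_lt | n_ge]; first by case: (Ubeta_step_init n_lt).
by have := Ubeta_step_rec_lower n_ge; have := U_ge1 (i := (n - h)%N); lia.
Qed.

Lemma Ubeta_step_le : U n <= (tsum + 1) * U n.-1.
Proof.
case: (ltnP n h) => [n_lt | n_ge]; first by case: (Ubeta_step_init n_lt).
exact: Ubeta_step_rec_upper.
Qed.

End Step.

Lemma Ubeta_ge1_mono n i j : (i <= j < n)%N -> 1 <= U i <= U j.
Proof.
elim: n i j => [|n IH] i j; first by rewrite ltn0 andbF.
case: (ltnP j n) => [j_lt | j_ge] ij_in; first by apply: IH; lia.
have -> : j = n by lia.
case: (posnP n) => [n0 | n_gt0].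
  have -> : i = 0%N by lia.
  by rewrite n0.
have U_lt := Ubeta_step_lt n_gt0 IH.
case: (ltnP i n) => [i_lt | i_ge].
  by have := IH i n.-1; lia.
have -> : i = n by lia.
by have := IH n.-1 n.-1; lia.
Qed.

Lemma Ubeta_nat n : U n = (`|U n|%N)%:Z.
Proof. by have /andP[U_ge1 _] := @Ubeta_ge1_mono n.+1 n n ltac:(lia); rewrite gez0_abs //; lia. Qed.

Lemma tsum_nat : tsum = (`|tsum|%N)%:Z.
Proof. by rewrite gez0_abs // /tsum big_nat_cond sumr_ge0. Qed.

Lemma absUbeta_lt i : (`|U i| < `|U i.+1|)%N.
Proof.
rewrite -ltz_nat -!Ubeta_nat.
by apply: (@Ubeta_step_lt i.+1) => // ? ? /Ubeta_ge1_mono.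
Qed.

Lemma absUbeta_superadd n : (h <= n)%N -> (`|U n.-1| + `|U (n - h)| <= `|U n|)%N.
Proof.
move=> n_ge; rewrite -lez_nat PoszD -!Ubeta_nat.
by apply: Ubeta_step_rec_lower => // [|? ? /Ubeta_ge1_mono //]; lia.
Qed.

Lemma absUbeta_ratio n : (0 < n)%N -> (`|U n| <= (`|tsum| + 1) * `|U n.-1|)%N.
Proof.
move=> n_gt0; rewrite -lez_nat PoszM PoszD -tsum_nat -!Ubeta_nat.
by apply: Ubeta_step_le => // ? ? /Ubeta_ge1_mono.
Qed.

End UbetaGrowth.

Section GreedyRepresentation.
Variable U : nat -> nat.
Hypotheses (U0 : U 0 = 1) (U_incr : forall i, U i < U i.+1).

Lemma U_ltn : {homo U : i j / i < j}.
Proof. exact: homo_ltn ltn_trans U_incr. Qed.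

Lemma U_leq : {homo U : i j / i <= j}.
Proof. exact: ltnW_homo U_ltn. Qed.

Lemma ltn_U i : i < U i.
Proof. by elim: i => [|i IH]; [rewrite U0 | apply: leq_ltn_trans IH (U_incr i)]. Qed.

Lemma size_gdigits i r : size (gdigits U i r) = i.+1.
Proof. by elim: i r => //= i IH r; rewrite IH. Qed.

Lemma rep_top L n : U L <= n < U L.+1 -> rep U n = gdigits U L n.
Proof.
move=> /andP[UL_le n_lt]; have n_gt0 : n != 0 by have := ltn_U L; lia.
rewrite /rep (negbTE n_gt0); congr gdigits; apply/eqP; rewrite eqn_leq.
apply/andP; split.
  apply/bigmax_leqP_seq => i _ Ui_le; rewrite leqNgt; apply/negP => /U_leq.
  by lia.
by apply: leq_bigmax_seq => //; rewrite mem_iota /=; have := ltn_U L; lia.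
Qed.

Lemma gdigits_rep i n : n < U i.+1 ->
  size (rep U n) <= i.+1 /\ gdigits U i n = nseq (i.+1 - size (rep U n)) 0 ++ rep U n.
Proof.
elim: i n => [|i IH] n n_lt.
  case: (posnP n) => [-> | n_gt0]; first by rewrite /rep /= div0n.
  by rewrite (@rep_top 0); last by rewrite U0; lia.
case: (ltnP n (U i.+1)) => [n_lt' | n_ge].
  have [size_le pad] := IH n n_lt'; split; first by lia.
  rewrite /= (divn_small n_lt') (modn_small n_lt') pad.
  by have -> : i.+2 - size (rep U n) = (i.+1 - size (rep U n)).+1 by lia.
by rewrite (@rep_top i.+1) ?size_gdigits ?subnn //; lia.
Qed.

Lemma size_rep j n : n < U j -> size (rep U n) <= j.
Proof.
case: j => [|j] n_lt; last by case: (gdigits_rep n_lt).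
by have -> : n = 0 by move: n_lt; rewrite U0; lia.
Qed.

Lemma rep_add_U J n : 0 < J -> n < U J -> n + U J < U J.+1 ->
  rep U (n + U J) = 1 :: nseq (J - size (rep U n)) 0 ++ rep U n.
Proof.
case: J => // J _ n_lt sum_lt; have [_ pad] := gdigits_rep n_lt.
rewrite (@rep_top J.+1) /=; last by lia.
have -> : n + U J.+1 = 1 * U J.+1 + n by lia.
by rewrite divnMDl ?(divn_small n_lt) ?modnMDl ?(modn_small n_lt) ?pad //; lia.
Qed.

End GreedyRepresentation.

Lemma iter_periodic_fact (T : finType) (f : T -> T) x r i :
  #|T| <= r -> iter (r + i * #|T|`!) f x = iter r f x.
Proof.
move=> r_ge.
have : looping f x #|T|.
  apply/negPn; rewrite -looping_uniq; apply/negP => /card_uniqP.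
  rewrite size_traject => card_eq.
  by have := max_card [in traject f x #|T|.+1]; rewrite card_eq ltnn.
move=> /trajectP[a a_lt loop_a].
set d := #|T| - a.
have period r' : a <= r' -> iter (r' + d) f x = iter r' f x.
  move=> a_le; have -> : r' + d = (r' - a) + #|T| by rewrite /d; lia.
  by rewrite iterD loop_a -iterD subnK.
have period_mul c r' : a <= r' -> iter (r' + c * d) f x = iter r' f x.
  move=> a_le; elim: c => [|c IH]; first by rewrite addn0.
  by rewrite mulSn addnCA addnC period ?IH //; lia.
have /dvdnP[c ->] : d %| #|T|`! by apply: dvdn_fact; lia.
by rewrite mulnA period_mul //; lia.
Qed.

Lemma dfao_run_one_zeros (B : DFAO) r w :
  dfao_run B (1 :: nseq r 0 ++ w) =
  dfao_out (foldl (@dfao_delta B) (iter r (@dfao_delta B ^~ 0) (dfao_delta (dfao_init B) 1)) w).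
Proof.
rewrite /dfao_run /= foldl_cat; congr (dfao_out (foldl _ _ w)).
by elim: r (dfao_delta _ 1) => //= r IH q; rewrite IH -iterSr.
Qed.

Lemma Vcorr_ext k s M (D1 D2 : 'I_k -> nat) : D1 =1 D2 -> Vcorr s M D1 = Vcorr s M D2.
Proof.
by move=> eqD; apply: eq_bigr => n _; congr (_ ^+ _)%R; apply: eq_bigr => i _; rewrite eqD.
Qed.

Lemma Ccorr_ge k s N (D : 'I_k -> nat) M : M <= N ->
  strictly_increasing D -> (forall i, M + D i <= N) -> `|Vcorr s M D|%N <= Ccorr k s N.
Proof.
move=> M_le D_incr D_le; have M_lt : M < N.+1 by [].
pose Df : {ffun 'I_k -> 'I_N.+1} := [ffun i => inord (D i)].
have Df_val i : nat_of_ord (Df i) = D i by rewrite ffunE inordK //; have := D_le i; lia.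
have Df_incr : strictly_increasing (fun i => nat_of_ord (Df i)).
  apply/forallP => i; apply/forallP => j; rewrite !Df_val.
  by move/forallP: D_incr => /(_ i)/forallP.
apply: leq_trans (leq_bigmax_cond Df Df_incr).
have M_ok : [forall i : 'I_k, (Ordinal M_lt) + Df i <= N].
  by apply/forallP => i /=; rewrite Df_val.
apply: leq_trans (leq_bigmax_cond (Ordinal M_lt) M_ok).
by rewrite (@Vcorr_ext _ _ _ D (fun i => nat_of_ord (Df i))).
Qed.

Lemma Vcorr_const_even k s M (D : 'I_k -> nat) : ~~ odd k ->
  (forall n, n < M -> exists b, forall i, s (n + D i) = b) -> `|Vcorr s M D|%N = M.
Proof.
move=> k_even s_const.
rewrite /Vcorr (eq_bigr (fun _ => 1%R)) ?sumr_const ?card_ord ?natz // => -[n n_lt] _ /=.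
have [b s_b] := s_const n n_lt.
rewrite (eq_bigr (fun _ => nat_of_bool b)) => [|i _]; last by rewrite s_b.
by rewrite sum_nat_const card_ord -signr_odd oddM (negbTE k_even).
Qed.

Definition offset_span (q h k : nat) : nat := (2 * k).-1 * q`! + maxn q h.

Section LinearLowerBound.
Variables (U : nat -> nat) (h K : nat).
Hypotheses (U0 : U 0 = 1) (U_incr : forall i, U i < U i.+1)
  (U_superadd : forall n, h <= n -> U n.-1 + U (n - h) <= U n)
  (U_ratio : forall n, 0 < n -> U n <= K * U n.-1).
Variables (B : DFAO) (s : nat -> bool).
Hypothesis s_gen : generates B U s.
Local Notation q := #|dfao_state B|.

Lemma U_mul_pow j r : U (j + r) <= K ^ r * U j.
Proof.
elim: r => [|r IH]; first by rewrite addn0 mul1n.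
rewrite addnS expnS -mulnA; apply: leq_trans (U_ratio (ltn0Sn _)) _.
by rewrite leq_mul2l IH orbT.
Qed.

Lemma generated_shift_periodic j J n i : n < U j -> h + j <= J.+1 -> q + j <= J ->
  s (n + U (J + i * q`!)) = s (n + U J).
Proof.
move=> n_lt hj_le qj_le.
have q_gt0 : 0 < q by apply/card_gt0P; exists (dfao_init B).
have size_le : size (rep U n) <= j by apply: size_rep.
have shift J' : J <= J' -> s (n + U J') = dfao_out (foldl (@dfao_delta B)
    (iter (J' - size (rep U n)) (@dfao_delta B ^~ 0) (dfao_delta (dfao_init B) 1)) (rep U n)).
{ move=> J_le; rewrite s_gen rep_add_U ?dfao_run_one_zeros //; first by lia.
  - by apply: leq_trans n_lt (U_leq U_incr _); lia.
  - have := U_superadd (n := J'.+1) ltac:(lia); have := @U_leq _ U_incr j (J'.+1 - h).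
    by rewrite /=; lia. }
rewrite !shift ?leq_addr //.
have -> : J + i * q`! - size (rep U n) = (J - size (rep U n)) + i * q`! by lia.
by rewrite iter_periodic_fact //; lia.
Qed.

Lemma Ccorr_ge_U k j N : 0 < k -> 2 * U (j + offset_span q h k) <= N ->
  U j <= Ccorr (2 * k) s N.
Proof.
move=> k_gt0 N_ge.
set J := j + maxn q h; pose D (i : 'I_(2 * k)) := U (J + i * q`!).
have D_le i : D i <= U (j + offset_span q h k).
  apply: U_leq U_incr _ _ _; rewrite /J /offset_span -addnA leq_add2l addnC leq_add2r.
  by rewrite leq_mul2r -ltnS prednK ?muln_gt0 ?ltn_ord ?orbT.
have Uj_le : U j <= U (j + offset_span q h k) by apply: U_leq U_incr _ _ (leq_addr _ _).
have D_incr : strictly_increasing D.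
  apply/forallP => i; apply/forallP => i'; apply/implyP => lt_ii'.
  by apply: U_ltn U_incr _ _ _; rewrite ltn_add2l ltn_mul2r fact_gt0.
rewrite -{1}(@Vcorr_const_even _ s (U j) D); last first.
- move=> n n_lt; exists (s (n + U J)) => i.
  by apply: generated_shift_periodic n_lt _ _; lia.
- by rewrite oddM.
by apply: Ccorr_ge => // [|i]; [|have := D_le i]; lia.
Qed.

Theorem Ccorr_linear_lower_bound k : 0 < k -> exists N0, forall N, N0 <= N ->
  N <= 2 * K ^ (offset_span q h k).+1 * Ccorr (2 * k) s N.
Proof.
move=> k_gt0; set E := offset_span q h k.
exists (2 * U E) => N N_ge.
have j_bound j : 2 * U (j + E) <= N -> j <= N.
  by have := ltn_U U0 U_incr (j + E); lia.
have [j j_ok j_max] := @ex_maxnP (fun j => 2 * U (j + E) <= N) N (ex_intro _ 0 N_ge) j_bound.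
have N_lt : N < 2 * U (j.+1 + E).
  by rewrite ltnNge; apply/negP => /j_max; rewrite ltnn.
apply: leq_trans (ltnW N_lt) _; rewrite -mulnA leq_mul2l /= addSn -addnS.
apply: leq_trans (U_mul_pow _ _) _.
by rewrite leq_mul2l (Ccorr_ge_U k_gt0 j_ok) orbT.
Qed.

End LinearLowerBound.

Lemma Rinv_INR_mul_le (a n c : nat) : (0 < a)%N -> (n <= a * c)%N ->
  Rle (Rmult (Rinv (INR a)) (INR n)) (INR c).
Proof.
move=> a_gt0 /leP/le_INR; rewrite mult_INR => n_le.
have a_pos : Rlt 0 (INR a) by apply/lt_0_INR/ltP.
apply: (Rmult_le_reg_l (INR a)) => //; rewrite -Rmult_assoc Rinv_r; lra.
Qed.

Theorem mainTheorem1 :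
  forall (beta : R), Rlt 1 beta ->
  forall (t : nat -> nat), is_dbeta1 beta t ->
  forall (m p : nat), minimal_preperiod_period t m p ->
  forall (k : nat), (1 <= k)%N ->
  forall (nQ : nat),
  exists c : R, Rlt 0 c /\
    forall (B : DFAO), #|dfao_state B| = nQ ->
    forall (s : nat -> bool),
      generates B (fun n => absz (Ubeta t m p n)) s ->
      exists N0 : nat, forall N : nat, (N0 <= N)%N ->
        Rle (Rmult c (INR N)) (INR (Ccorr (2 * k) s N)).
Proof.
move=> beta beta_gt1 t t_dbeta1 m p [[p_gt0 t_per] _] k k_gt0 nQ.
have t0_gt0 := dbeta1_head_pos beta_gt1 t_dbeta1.
have [j0 j0_window tj0_gt0] :=
  periodic_window_pos (conj p_gt0 t_per) (dbeta1_not_finite beta_gt1 t_dbeta1 (m := m)).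
set a := (2 * (`|tsum t m p| + 1) ^ (offset_span nQ (m + p) k).+1)%N.
have a_gt0 : (0 < a)%N by rewrite muln_gt0 expn_gt0 addn1.
exists (Rinv (INR a)); split; first by apply/Rinv_0_lt_compat/lt_0_INR/ltP.
move=> B card_B s s_gen.
have [N0 N0_le] := Ccorr_linear_lower_bound (U := fun n => `|Ubeta t m p n|%N) erefl
  (absUbeta_lt p_gt0 t0_gt0 j0_window tj0_gt0)
  (absUbeta_superadd p_gt0 t0_gt0 j0_window tj0_gt0)
  (absUbeta_ratio p_gt0 t0_gt0 j0_window tj0_gt0) s_gen k_gt0.
exists N0 => N N_ge; apply: Rinv_INR_mul_le => //.
by rewrite /a -card_B; apply: N0_le.
Qed.
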